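(* Let $\Phi:I\to O$ be a quantum channel and let $(\mathcal{E},W)$ and $(\mathcal{E}',W')$ be two Stinespring modules related to $\Phi$. Then $$W^*\mathcal{L}(\mathcal{E})W=W'^*\mathcal{L}(\mathcal{E}')W'\subseteq\mathcal{L}(\mathcal{M}_\Phi).$$
   Context: All Hilbert spaces are finite dimensional; inner products are linear in the second variable. $H_{in}=\bigoplus_a H^a_{in}$, $H_{out}=\bigoplus_b H^b_{out}$, $I=\bigoplus_a B(H^a_{in})\subseteq B(H_{in})$, $O=\bigoplus_b B(H^b_{out})\subseteq B(H_{out})$. A quantum channel is a trace-preserving completely positive map $\Phi:I\to O$. $e^a_i$ is an orthonormal basis of $H^a_{in}$, $e^a_{ij}$ the matrix units. $O^{op}$ is the opposite algebra of $O$ (product $a*b=ba$). Hilbert $O^{op}$-modules are right modules with $O^{op}$-valued inner products; $\mathcal{L}(\mathcal{M},\mathcal{N})$ denotes adjointable module maps and $\mathcal{L}(\mathcal{M})=\mathcal{L}(\mathcal{M},\mathcal{M})$. $\mathcal{M}_\Phi=H_{in}\otimes O^{op}$ with $(\xi\otimes a)*x=\xi\otimes(a*x)$ and $\langle\xi\otimes a,\eta\otimes b\rangle_{O^{op}}=\langle\xi,\eta\rangle a^**b$. $C_\Phi\in\mathcal{L}(\mathcal{M}_\Phi)$ is the $O^{op}$-linear map with $C_\Phi(e^a_j\otimes1)=\sum_i e^a_i\otimes\Phi(e^a_{ji})$ (with $\Phi(e^a_{ji})$ viewed in $O^{op}$). A Stinespring module related to $\Phi$ is a pair $(\mathcal{E},W)$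 with $\mathcal{E}$ a Hilbert $O^{op}$-module and $W\in\mathcal{L}(\mathcal{M}_\Phi,\mathcal{E})$ with $W^*W=C_\Phi$. *)

From HB Require Import structures.
From mathcomp Require Import all_boot all_algebra.
From mathcomp Require Import reals complex.

Set Implicit Arguments.
Unset Strict Implicit.
Unset Printing Implicit Defensive.

Import GRing.Theory Num.Theory.
Local Open Scope ring_scope.

Section QuantumDefs.

Variable R : realType.
Local Notation C := R[i].

Definition mxadj p q (A : 'M[C]_(p, q)) : 'M[C]_(q, p) :=
  (map_mx (@Num.conj C) A)^T.

(** A direct sum of full matrix algebras  \bigoplus_a B(H^a) \subseteq B(C^p):
    the block structure is given by a labelling  l : 'I_p -> nat  of the
    standard basis vectors (H^a = span {e_i | l i = a}); the algebra is the
    set of matrices whose (i,j) entry vanishes when  l i <> l j. *)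
Definition blk p (l : 'I_p -> nat) (A : 'M[C]_p) : bool :=
  [forall i, forall j, (l i != l j) ==> (A i j == 0)].

(** positivity in M_k(A) for the C*-algebra A = blk l  (X = Y^* Y, Y in M_k(A));
    an element of M_k(A) is given blockwise as  X : 'I_k -> 'I_k -> 'M_p. *)
Definition posMk p (l : 'I_p -> nat) k (X : 'I_k -> 'I_k -> 'M[C]_p) : Prop :=
  exists Y : 'I_k -> 'I_k -> 'M[C]_p,
    (forall r s, blk l (Y r s)) /\
    (forall s t, X s t = \sum_(r < k) mxadj (Y r s) *m Y r t).

(** quantum channel  Phi : I -> O  (trace preserving, completely positive).
    Phi is given as a map on all of B(H_in); only its restriction to I matters. *)
Record channel n m (lI : 'I_n -> nat) (lO : 'I_m -> nat)
    (Phi : 'M[C]_n -> 'M[C]_m) : Prop := {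
  ch_range : forall A, blk lI A -> blk lO (Phi A);
  ch_linear : forall (c : C) A B, blk lI A -> blk lI B ->
      Phi (c *: A + B) = c *: Phi A + Phi B;
  ch_cp : forall k (X : 'I_k -> 'I_k -> 'M[C]_n),
      (forall s t, blk lI (X s t)) -> posMk lI X ->
      posMk lO (fun s t => Phi (X s t));
  ch_tp : forall A, blk lI A -> \tr (Phi A) = \tr A
}.

Section HilbertModules.
Variables (m : nat) (lO : 'I_m -> nat).

(** Hilbert O^op-module structure on a complex vector space E:
    right action  act x a = x * a  (a in O, product of O^op: a * b = b a),
    O^op-valued inner product  ip x y = <x, y>  (linear in the second variable). *)
Record HilbMod (E : lmodType C) (act : E -> 'M[C]_m -> E)
    (ip : E -> E -> 'M[C]_m) : Prop := {
  hm_act_assoc : forall x a b, blk lO a -> blk lO b ->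
      act x (b *m a) = act (act x a) b;               (* x*(a*b) = (x*a)*b *)
  hm_act1 : forall x, act x 1%:M = x;
  hm_actDl : forall x y a, blk lO a -> act (x + y) a = act x a + act y a;
  hm_actDr : forall x a b, blk lO a -> blk lO b ->
      act x (a + b) = act x a + act x b;
  hm_actZl : forall (c : C) x a, blk lO a -> act (c *: x) a = c *: act x a;
  hm_actZr : forall (c : C) x a, blk lO a -> act x (c *: a) = c *: act x a;
  hm_ip_range : forall x y, blk lO (ip x y);
  hm_ip_lin : forall (c : C) x y z, ip x (c *: y + z) = c *: ip x y + ip x z;
  hm_ip_act : forall x y a, blk lO a -> ip x (act y a) = a *m ip x y;
                                                      (* <x,y*a> = <x,y>*a *)
  hm_ip_adj : forall x y, ip y x = mxadj (ip x y);
  hm_ip_pos : forall x, exists2 b, blk lO b & ip x x = b *m mxadj b;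
                                                      (* <x,x> = b^* * b in O^op *)
  hm_ip_def : forall x, ip x x = 0 -> x = 0;
  hm_complete : forall u : nat -> E,
      (forall eps : R, 0 < eps -> exists N, forall p q, (N <= p)%N -> (N <= q)%N ->
          `| \tr (ip (u p - u q) (u p - u q)) | < (eps%:C)%C) ->
      exists x, forall eps : R, 0 < eps -> exists N, forall p, (N <= p)%N ->
          `| \tr (ip (u p - x) (u p - x)) | < (eps%:C)%C
}.

Definition Lmap (E F : lmodType C) (actE : E -> 'M[C]_m -> E)
    (ipE : E -> E -> 'M[C]_m) (actF : F -> 'M[C]_m -> F)
    (ipF : F -> F -> 'M[C]_m) (T : E -> F) : Prop :=
  [/\ forall (c : C) x y, T (c *: x + y) = c *: T x + T y,
      forall x a, blk lO a -> T (actE x a) = actF (T x) a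
    & exists Ta : F -> E, forall x y, ipF (T x) y = ipE x (Ta y)].

Definition is_adjoint (E F : lmodType C) (ipE : E -> E -> 'M[C]_m)
    (ipF : F -> F -> 'M[C]_m) (T : E -> F) (Ta : F -> E) : Prop :=
  forall x y, ipF (T x) y = ipE x (Ta y).

End HilbertModules.

(** The module  M_Phi = H_in (x) O^op,  H_in = C^n, realised as the n-tuples
    (x_i)_i of elements of O, via  xi (x) a  |->  (xi_i a)_i. *)
Section MPhi.
Variables (n m : nat) (lO : 'I_m -> nat).

Definition Mpred : {pred {ffun 'I_n -> 'M[C]_m}} :=
  fun x => [forall i, blk lO (x i)].

Fact Mpred_submod : subsemimod_closed Mpred.
Proof.
split; [split|].
- apply/forallP => i; apply/forallP => j; apply/forallP => k.
  by apply/implyP => _; rewrite ffunE mxE.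
- move=> x y /forallP Hx /forallP Hy; apply/forallP => i.
  apply/forallP => j; apply/forallP => k; apply/implyP => hjk.
  move: (Hx i) (Hy i) => /forallP /(_ j) /forallP /(_ k) /implyP /(_ hjk) /eqP h1.
  move=> /forallP /(_ j) /forallP /(_ k) /implyP /(_ hjk) /eqP h2.
  by rewrite ffunE mxE h1 h2 addr0.
- move=> c x /forallP Hx; apply/forallP => i.
  apply/forallP => j; apply/forallP => k; apply/implyP => hjk.
  move: (Hx i) => /forallP /(_ j) /forallP /(_ k) /implyP /(_ hjk) /eqP h1.
  by rewrite ffunE mxE h1 mulr0.
Qed.

HB.instance Definition _ :=
  GRing.isSubmodClosed.Build C {ffun 'I_n -> 'M[C]_m} Mpred Mpred_submod.

Record Mphi := MPhi { mval :> {ffun 'I_n -> 'M[C]_m}; mvalP : mval \in Mpred }.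
HB.instance Definition _ := [isSub for mval].
HB.instance Definition _ := [Choice of Mphi by <:].
HB.instance Definition _ := [SubChoice_isSubLmodule of Mphi by <:].

(** right O^op-action:  (xi (x) a) * c = xi (x) (c a) *)
Definition actM (x : Mphi) (c : 'M[C]_m) : Mphi :=
  insubd x [ffun i => c *m x i].

(** <xi (x) a, eta (x) b> = <xi, eta> a^* * b = <xi,eta> b a^*  (product of O) *)
Definition ipM (x y : Mphi) : 'M[C]_m := \sum_(i < n) y i *m mxadj (x i).

(** C_Phi : the O^op-linear map with
    C_Phi (e_j (x) 1) = \sum_{i in the block of j} e_i (x) Phi (e_{ji}) *)
Definition Cphi (lI : 'I_n -> nat) (Phi : 'M[C]_n -> 'M[C]_m) (x : Mphi) : Mphi :=
  insubd 0 [ffun i => \sum_(j < n | lI j == lI i) x j *m Phi (delta_mx j i)].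

End MPhi.

Definition Stinespring n m (lI : 'I_n -> nat) (lO : 'I_m -> nat)
    (Phi : 'M[C]_n -> 'M[C]_m) (E : lmodType C) (actE : E -> 'M[C]_m -> E)
    (ipE : E -> E -> 'M[C]_m) (W : Mphi n lO -> E) (Wa : E -> Mphi n lO) : Prop :=
  [/\ HilbMod lO actE ipE,
      Lmap lO (@actM n m lO) (@ipM n m lO) actE ipE W,
      is_adjoint (@ipM n m lO) ipE W Wa
    & forall x, Wa (W x) = Cphi lI Phi x].

Definition compress n m (lO : 'I_m -> nat) (E : lmodType C)
    (actE : E -> 'M[C]_m -> E) (ipE : E -> E -> 'M[C]_m)
    (W : Mphi n lO -> E) (Wa : E -> Mphi n lO) (X : Mphi n lO -> Mphi n lO) : Prop :=
  exists T : E -> E, Lmap lO actE ipE actE ipE T /\ X = Wa \o T \o W.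

End QuantumDefs.

From HB Require Import structures.
From mathcomp Require Import all_boot all_algebra.
From mathcomp Require Import reals complex.
From Stdlib Require Import FunctionalExtensionality.

Set Implicit Arguments.
Unset Strict Implicit.
Unset Printing Implicit Defensive.

Import GRing.Theory Num.Theory.
Local Open Scope ring_scope.

(** The compressions by W and W' are both governed by the Gram operator
    C = W^* W = W'^* W' on the finite-dimensional module M_Phi.  Being a
    self-adjoint module map, C satisfies ker C^2 = ker C, so an annihilating
    polynomial of C yields a polynomial q with C = C^2 q(C).  Then G = q(C) is an
    inner inverse of C (C G C = C) and, like every polynomial in C, an adjointable
    module map.  Since <W z, W z> = <z, C z>, the identity C (G C x - x) = 0 gives
    W G C = W, and dually C G^* W^* = W^*.  Hence
      W^* T W = C G^* W^* T W G C = W'^* (W' G^* W^* T W G W'^* ) W'. *)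

Section LinearFunctions.
Variables (K : pzRingType) (V U : lmodType K) (f : V -> U).
Hypothesis f_lin : linear f.

Definition linear_pack : {linear V -> U} :=
  HB.pack f (GRing.isLinear.Build _ _ _ _ f f_lin).

Lemma lin0 : f 0 = 0.                 Proof. exact: (raddf0 linear_pack). Qed.
Lemma linD x y : f (x + y) = f x + f y. Proof. exact: (raddfD linear_pack). Qed.
Lemma linB x y : f (x - y) = f x - f y. Proof. exact: (raddfB linear_pack). Qed.
Lemma linZ a x : f (a *: x) = a *: f x. Proof. exact: (linearZZ linear_pack). Qed.
Lemma lin_sum I r (P : pred I) (F : I -> V) :
  f (\sum_(i <- r | P i) F i) = \sum_(i <- r | P i) f (F i).
Proof. exact: (raddf_sum linear_pack). Qed.

End LinearFunctions.

Section PolynomialCalculus.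
Variables (K : fieldType) (V : lmodType K) (L : V -> V).
Hypothesis L_lin : linear L.
Implicit Types (p q : {poly K}) (x y : V).

Definition peval (p : {poly K}) (x : V) : V :=
  \sum_(k < size p) p`_k *: iter k L x.

Lemma iter_linear k : linear (iter k L).
Proof. by elim: k => [|k IHk] a x y //=; rewrite IHk L_lin. Qed.

Lemma peval_widen N p x : (size p <= N)%N ->
  peval p x = \sum_(k < N) p`_k *: iter k L x.
Proof.
move=> leN; rewrite /peval (big_ord_widen N (fun k => p`_k *: iter k L x) leN).
rewrite big_mkcond; apply: eq_bigr => k _; case: ltnP => // /(nth_default 0) ->.
by rewrite scale0r.
Qed.

Lemma peval_linear p : linear (peval p).
Proof.
move=> a x y; rewrite /peval scaler_sumr -big_split; apply: eq_bigr => k _ /=.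
by rewrite iter_linear scalerDr !scalerA mulrC.
Qed.

Lemma pevalD p q x : peval (p + q) x = peval p x + peval q x.
Proof.
pose N := maxn (size p) (size q).
rewrite !(@peval_widen N) ?leq_maxl ?leq_maxr ?(leq_trans (size_polyD _ _)) //.
by rewrite -big_split; apply: eq_bigr => k _; rewrite coefD scalerDl.
Qed.

Lemma pevalZ a p x : peval (a *: p) x = a *: peval p x.
Proof.
rewrite (@peval_widen (size p)) ?size_scale_leq // /peval scaler_sumr.
by apply: eq_bigr => k _; rewrite coefZ scalerA.
Qed.

Lemma pevalC a x : peval a%:P x = a *: x.
Proof. by rewrite (@peval_widen 1) ?size_polyC ?leq_b1 // big_ord1 coefC. Qed.

Lemma pevalMX p x : peval (p * 'X) x = peval p (L x).
Proof.
rewrite (@peval_widen (size p).+1); last first.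
  by have [->|p0] := eqVneq p 0; rewrite ?mul0r ?size_poly0 // size_mulX.
rewrite big_ord_recl coefMX /= scale0r add0r /peval; apply: eq_bigr => k _.
by rewrite coefMX /= -iterS iterSr.
Qed.

Lemma peval_commute (f : V -> V) : linear f -> (forall x, f (L x) = L (f x)) ->
  forall p x, f (peval p x) = peval p (f x).
Proof.
move=> f_lin fL p x; rewrite /peval (lin_sum f_lin); apply: eq_bigr => k _.
by rewrite (linZ f_lin); congr (_ *: _); elim: (val k) => //= j <-.
Qed.

Lemma poly_inner_inverse : (forall x, L (L x) = 0 -> L x = 0) ->
  forall p, p != 0 -> (forall x, peval p x = 0) ->
  exists q, forall x, L x = L (L (peval q x)).
Proof.
move=> kerL2 p0 p0_neq0 p0_ann.
have LLpeval q x : L (L (peval q x)) = peval q (L (L x)).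
  by rewrite !(peval_commute L_lin).
suff poly_range : forall p, p != 0 -> (forall x, peval p (L x) = 0) ->
    exists q, forall x, L x = L (L (peval q x)).
  by apply: (poly_range p0 p0_neq0) => x; exact: p0_ann.
elim/poly_ind => [|s c IHs]; first by rewrite eqxx.
move=> sc_neq0 sc_ann.
have ann x : peval s (L (L x)) + c *: L x = 0.
  by rewrite -pevalMX -pevalC -pevalD.
have [c0|c_neq0] := eqVneq c 0; last first.
  exists (- c^-1 *: s) => x; rewrite LLpeval pevalZ.
  have -> : peval s (L (L x)) = - (c *: L x) by apply/eqP; rewrite -addr_eq0 ann.
  by rewrite scalerN scaleNr opprK scalerA mulVf // scale1r.
move: sc_neq0 ann; rewrite c0 polyC0 addr0 mulf_eq0 polyX_eq0 orbF => s_neq0 ann.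
apply: IHs => // x; rewrite -(peval_commute L_lin) //; apply: kerL2.
by rewrite LLpeval; move: (ann x); rewrite scale0r addr0.
Qed.

Lemma exists_annihilating_poly k (enc : V -> 'rV[K]_k) (dec : 'rV[K]_k -> V) :
  linear enc -> cancel enc dec -> linear dec ->
  exists2 p : {poly K}, p != 0 & forall x, peval p x = 0.
Proof.
(* Cayley-Hamilton needs a nonempty matrix; for k = 0 the space V is trivial. *)
case: k enc dec => [|k] enc dec enc_lin encK dec_lin.
  exists 1; first exact: oner_neq0.
  by move=> x; rewrite -polyC1 pevalC scale1r -[x]encK thinmx0 (lin0 dec_lin).
have Lmx_lin : linear (enc \o L \o dec).
  by move=> a u v /=; rewrite dec_lin L_lin enc_lin.
pose A := lin1_mx (linear_pack Lmx_lin).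
have encL x : enc (L x) = enc x *m A.
  by rewrite (mul_rV_lin1 (linear_pack Lmx_lin)) /= encK.
have encP p x : enc (peval p x) = enc x *m horner_mx A p.
  elim/poly_ind: p x => [|p c IHp] x.
    by rewrite /peval size_poly0 big_ord0 rmorph0 mulmx0 (lin0 enc_lin).
  rewrite pevalD pevalMX -(peval_commute L_lin) // pevalC.
  rewrite (linD enc_lin) (linZ enc_lin) encL IHp rmorphD rmorphM /=.
  by rewrite horner_mx_X horner_mx_C mulmxDr -mulmxA mul_mx_scalar.
exists (char_poly A); first exact/monic_neq0/char_poly_monic.
move=> x; rewrite -[peval _ x]encK encP Cayley_Hamilton mulmx0.
by rewrite -(lin0 enc_lin) encK.
Qed.

End PolynomialCalculus.

Section HilbertModuleMaps.
Variable R : realType.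
Local Notation C := R[i].

Lemma mxadj0 p q : mxadj (0 : 'M[C]_(p, q)) = 0.
Proof. by apply/matrixP => i j; rewrite !mxE rmorph0. Qed.

Lemma mxadjD p q (A B : 'M[C]_(p, q)) : mxadj (A + B) = mxadj A + mxadj B.
Proof. by apply/matrixP => i j; rewrite !mxE rmorphD. Qed.

Lemma mxadjZ p q (c : C) (A : 'M[C]_(p, q)) : mxadj (c *: A) = c^* *: mxadj A.
Proof. by apply/matrixP => i j; rewrite !mxE rmorphM. Qed.

Lemma mxadjM p q r (A : 'M[C]_(p, q)) (B : 'M[C]_(q, r)) :
  mxadj (A *m B) = mxadj B *m mxadj A.
Proof. by rewrite /mxadj map_mxM trmx_mul. Qed.

Lemma mxadjK p q (A : 'M[C]_(p, q)) : mxadj (mxadj A) = A.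
Proof. by apply/matrixP => i j; rewrite !mxE conjCK. Qed.

Lemma mxadj_sum p q I r (P : pred I) (F : I -> 'M[C]_(p, q)) :
  mxadj (\sum_(i <- r | P i) F i) = \sum_(i <- r | P i) mxadj (F i).
Proof. exact: (big_morph _ (@mxadjD p q) (mxadj0 p q)). Qed.

Variables (m : nat) (lO : 'I_m -> nat).

Lemma blkP (A : 'M[C]_m) :
  reflect (forall i j, lO i != lO j -> A i j = 0) (blk lO A).
Proof.
apply: (iffP forallP) => [blkA i j ij | A0 i].
  by move/forallP/(_ j)/implyP/(_ ij)/eqP: (blkA i).
by apply/forallP => j; apply/implyP => ij; rewrite A0.
Qed.

Lemma blkM (A B : 'M[C]_m) : blk lO A -> blk lO B -> blk lO (A *m B).
Proof.
move=> /blkP A0 /blkP B0; apply/blkP => i j ij; rewrite mxE big1 // => k _.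
have [ik|/A0 -> //] := eqVneq (lO i) (lO k); last by rewrite mul0r.
by rewrite B0 ?mulr0 // -ik.
Qed.

Record preHilbMod (V : lmodType C) (act : V -> 'M[C]_m -> V)
    (ip : V -> V -> 'M[C]_m) : Prop := {
  phm_ip_lin : forall x, linear (ip x);
  phm_ip_adj : forall x y, ip y x = mxadj (ip x y);
  phm_ip_def : forall x, ip x x = 0 -> x = 0;
  phm_ip_act : forall x y a, blk lO a -> ip x (act y a) = a *m ip x y }.

Lemma HilbMod_preHilbMod (V : lmodType C) act ip :
  HilbMod lO act ip -> @preHilbMod V act ip.
Proof. by case=> *; split => // x c; auto. Qed.

Lemma Lmap_comp (V U Z : lmodType C) actV ipV actU ipU actZ ipZ
    (T : V -> U) (S : U -> Z) :
  Lmap lO actV ipV actU ipU T -> Lmap lO actU ipU actZ ipZ S ->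
  Lmap lO actV ipV actZ ipZ (S \o T).
Proof.
move=> [T_lin T_act [Ta T_adj]] [S_lin S_act [Sa S_adj]]; split.
- by move=> a x y /=; rewrite T_lin S_lin.
- by move=> x a blk_a /=; rewrite T_act ?S_act.
- by exists (Ta \o Sa) => x y /=; rewrite S_adj T_adj.
Qed.

Section PreHilbertModule.
Variables (V : lmodType C) (act : V -> 'M[C]_m -> V) (ip : V -> V -> 'M[C]_m).
Hypothesis hV : preHilbMod act ip.

Lemma ipr0 x : ip x 0 = 0.
Proof. exact: lin0 (phm_ip_lin hV x). Qed.

Lemma eq_from_ipr x y : (forall z, ip z x = ip z y) -> x = y.
Proof.
move=> ip_xy; apply/eqP; rewrite -subr_eq0; apply/eqP/(phm_ip_def hV).
by rewrite (linB (phm_ip_lin hV _)) ip_xy subrr.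
Qed.

Lemma act_linear a : blk lO a -> linear (act^~ a).
Proof.
move=> blk_a c x y; apply: eq_from_ipr => z.
rewrite (phm_ip_lin hV) !(phm_ip_act hV) // (phm_ip_lin hV).
by rewrite mulmxDr scalemxAr.
Qed.

Lemma is_adjoint_sym (U : lmodType C) actU (ipU : U -> U -> 'M[C]_m)
    (T : V -> U) Ta :
  preHilbMod actU ipU -> is_adjoint ip ipU T Ta ->
  forall u x, ip (Ta u) x = ipU u (T x).
Proof.
by move=> hU T_adj u x; rewrite (phm_ip_adj hV) -T_adj -(phm_ip_adj hU).
Qed.

Lemma is_adjoint_linear (U : lmodType C) actU (ipU : U -> U -> 'M[C]_m)
    (T : V -> U) Ta :
  preHilbMod actU ipU -> is_adjoint ip ipU T Ta -> linear Ta.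
Proof.
move=> hU T_adj c u v; apply: eq_from_ipr => z.
by rewrite -T_adj (phm_ip_lin hU) !T_adj (phm_ip_lin hV).
Qed.

Section AdjointPolynomials.
Variables (L La : V -> V).
Hypothesis L_adj : is_adjoint ip ip L La.

Lemma iter_adjoint k : is_adjoint ip ip (iter k L) (iter k La).
Proof. by elim: k => [|k IHk] x y //; rewrite iterSr IHk L_adj -iterS. Qed.

Lemma peval_adjoint p :
  is_adjoint ip ip (peval L p) (peval La (map_poly (@Num.conj C) p)).
Proof.
move=> x y; rewrite (phm_ip_adj hV) /peval size_map_poly.
rewrite (lin_sum (phm_ip_lin hV y)) (lin_sum (phm_ip_lin hV x)) mxadj_sum.
apply: eq_bigr => k _; rewrite !(linZ (phm_ip_lin hV _)) mxadjZ coef_map.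
by rewrite -(phm_ip_adj hV) iter_adjoint.
Qed.

End AdjointPolynomials.

Lemma Lmap_adjoint (U : lmodType C) actU (ipU : U -> U -> 'M[C]_m)
    (T : V -> U) Ta :
  preHilbMod actU ipU -> is_adjoint ip ipU T Ta -> Lmap lO actU ipU act ip Ta.
Proof.
move=> hU T_adj; split; first exact: is_adjoint_linear hU T_adj.
  move=> u a blk_a; apply: eq_from_ipr => z.
  by rewrite -T_adj (phm_ip_act hU) // T_adj (phm_ip_act hV).
by exists T; exact: is_adjoint_sym hU T_adj.
Qed.

Lemma Lmap_peval L p :
  Lmap lO act ip act ip L -> Lmap lO act ip act ip (peval L p).
Proof.
move=> [L_lin L_act [La L_adj]]; split; first exact: peval_linear.
  move=> x a blk_a; rewrite (peval_commute (act_linear blk_a)) // => y.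
  exact/esym/L_act.
by exists (peval La (map_poly (@Num.conj C) p)); apply: peval_adjoint.
Qed.

Lemma selfadjoint_inner_inverse L p :
  Lmap lO act ip act ip L -> is_adjoint ip ip L L ->
  p != 0 -> (forall x, peval L p x = 0) ->
  exists G, Lmap lO act ip act ip G /\ forall x, L (G (L x)) = L x.
Proof.
move=> L_map L_sa p_neq0 p_ann; have [L_lin _ _] := L_map.
have kerL2 x : L (L x) = 0 -> L x = 0.
  by move=> LLx0; apply: (phm_ip_def hV); rewrite L_sa LLx0 ipr0.
have [q Lq] := poly_inner_inverse L_lin kerL2 p_neq0 p_ann.
exists (peval L q); split; first exact: Lmap_peval.
by move=> x; rewrite -(peval_commute L_lin) // -Lq.
Qed.

End PreHilbertModule.

Section GramInnerInverse.
Variables (V U : lmodType C) (actV : V -> 'M[C]_m -> V) (actU : U -> 'M[C]_m -> U).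
Variables (ipV : V -> V -> 'M[C]_m) (ipU : U -> U -> 'M[C]_m).
Hypotheses (hV : preHilbMod actV ipV) (hU : preHilbMod actU ipU).
Variables (W : V -> U) (Wa : U -> V) (G Ga : V -> V).
Hypotheses (W_lin : linear W) (W_adj : is_adjoint ipV ipU W Wa).
Hypothesis G_adj : is_adjoint ipV ipV G Ga.
Hypothesis G_inner_inverse : forall x, Wa (W (G (Wa (W x)))) = Wa (W x).

Lemma inner_inverse_cancel x : W (G (Wa (W x))) = W x.
Proof.
have Wa_lin := is_adjoint_linear hV hU W_adj.
set z := G (Wa (W x)) - x.
have Cz0 : Wa (W z) = 0.
  by rewrite (linB W_lin) (linB Wa_lin) G_inner_inverse subrr.
apply/eqP; rewrite -subr_eq0 -(linB W_lin); apply/eqP/(phm_ip_def hU).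
by rewrite W_adj Cz0 (ipr0 hV).
Qed.

Lemma inner_inverse_cancel_adj u : Wa (W (Ga (Wa u))) = Wa u.
Proof.
apply: (eq_from_ipr hV) => y.
rewrite -W_adj -(is_adjoint_sym hV hU W_adj) -G_adj -W_adj.
by rewrite inner_inverse_cancel W_adj.
Qed.

End GramInnerInverse.

Section MPhiModule.
Variable n : nat.
Local Notation M := (Mphi R n lO).
Implicit Types (x y : M) (a : 'M[C]_m).

Lemma mval_blk x i : blk lO (mval x i).
Proof. exact: forallP (mvalP x) i. Qed.

Lemma actM_val x a : blk lO a -> mval (actM x a) = [ffun i => a *m mval x i].
Proof.
move=> blk_a; rewrite insubdK //; apply/forallP => i.
by rewrite ffunE blkM ?mval_blk.
Qed.

Lemma Mphi_preHilbMod : preHilbMod (@actM R n m lO) (@ipM R n m lO).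
Proof.
split.
- move=> x c y z; rewrite /ipM scaler_sumr -big_split; apply: eq_bigr => i _ /=.
  by rewrite !ffunE mulmxDl scalemxAl.
- move=> x y; rewrite /ipM mxadj_sum; apply: eq_bigr => i _.
  by rewrite mxadjM mxadjK.
- move=> x xx0; apply: val_inj; apply/ffunP => i; apply/matrixP => j k.
  (* the (j, j) entry of <x, x> is the sum of all |x i j l|^2 *)
  have /eqP : ipM x x j j = 0 by rewrite xx0 mxE.
  rewrite /ipM summxE psumr_eq0 => [/allP/(_ i (mem_index_enum _))|i' _]; last first.
    by rewrite mxE sumr_ge0 // => l _; rewrite !mxE mul_conjC_ge0.
  rewrite mxE psumr_eq0 => [/allP/(_ k (mem_index_enum _))|l _]; last first.
    by rewrite !mxE mul_conjC_ge0.
  by rewrite !mxE mul_conjC_eq0 => /eqP ->; rewrite ffunE mxE.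
- move=> x y a blk_a; rewrite /ipM mulmx_sumr; apply: eq_bigr => i _.
  by rewrite actM_val // ffunE mulmxA.
Qed.

Definition blk_proj (A : 'M[C]_m) : 'M[C]_m :=
  \matrix_(i, j) if lO i == lO j then A i j else 0.

Lemma blk_proj_blk A : blk lO (blk_proj A).
Proof. by apply/blkP => i j /negbTE ij; rewrite mxE ij. Qed.

Lemma blk_projE A : blk lO A -> blk_proj A = A.
Proof.
move=> /blkP A0; apply/matrixP => i j; rewrite mxE.
by case: eqP => // /eqP ij; rewrite A0.
Qed.

Lemma blk_proj_linear : linear blk_proj.
Proof.
move=> c A B; apply/matrixP => i j; rewrite !mxE.
by case: ifP; rewrite ?mulr0 ?addr0.
Qed.

Fact Mphi_of_subproof (f : {ffun 'I_n -> 'M[C]_m}) :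
  [ffun i => blk_proj (f i)] \in Mpred lO.
Proof. by apply/forallP => i; rewrite ffunE blk_proj_blk. Qed.

Definition Mphi_of (f : {ffun 'I_n -> 'M[C]_m}) : M := MPhi (Mphi_of_subproof f).

Lemma Mphi_ofE f : val (Mphi_of f) = [ffun i => blk_proj (f i)].
Proof. by []. Qed.

Lemma Mphi_of_linear : linear Mphi_of.
Proof.
move=> c f g; apply: val_inj; apply/ffunP => i /=.
by rewrite !ffunE blk_proj_linear.
Qed.

Lemma Mphi_annihilating_poly (L : M -> M) : linear L ->
  exists2 p : {poly C}, p != 0 & forall x, peval L p x = 0.
Proof.
pose e := vbasis {:{ffun 'I_n -> 'M[C]_m}}.
move=> L_lin; apply: (exists_annihilating_poly L_lin
  (enc := fun x => passmx.rVof e (val x)) (dec := fun u => Mphi_of (passmx.vecof e u))).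
- by move=> c x y; rewrite linearP passmx.rVof_linear.
- move=> x; apply: val_inj; apply/ffunP => i.
  by rewrite Mphi_ofE passmx.rVofK ?vbasisP // ffunE blk_projE ?mval_blk.
- by move=> c u v; rewrite passmx.vecof_linear Mphi_of_linear.
Qed.

End MPhiModule.

Section StinespringModules.
Variables (n : nat) (lI : 'I_n -> nat) (Phi : 'M[C]_n -> 'M[C]_m).
Local Notation M := (Mphi R n lO).
Local Notation actM := (@actM R n m lO).
Local Notation ipM := (@ipM R n m lO).

Lemma compress_Lmap (E : lmodType C) actE ipE (W : M -> E) Wa X :
  Stinespring lI Phi actE ipE W Wa -> compress actE ipE W Wa X ->
  Lmap lO actM ipM actM ipM X.
Proof.
move=> [/HilbMod_preHilbMod hE W_map W_adj _] [T [T_map ->]].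
have Wa_map := Lmap_adjoint (Mphi_preHilbMod n) hE W_adj.
exact: Lmap_comp (Lmap_comp W_map T_map) Wa_map.
Qed.

Lemma Stinespring_inner_inverse (E : lmodType C) actE ipE (W : M -> E) Wa :
  Stinespring lI Phi actE ipE W Wa ->
  exists G, Lmap lO actM ipM actM ipM G /\
            forall x, Wa (W (G (Wa (W x)))) = Wa (W x).
Proof.
move=> [/HilbMod_preHilbMod hE W_map W_adj _]; have hM := Mphi_preHilbMod n.
have gram_map : Lmap lO actM ipM actM ipM (Wa \o W).
  exact: Lmap_comp W_map (Lmap_adjoint hM hE W_adj).
have gram_sa : is_adjoint ipM ipM (Wa \o W) (Wa \o W).
  by move=> x y /=; rewrite (is_adjoint_sym hM hE W_adj) W_adj.
have [gram_lin _ _] := gram_map.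
have [p p_neq0 p_ann] := Mphi_annihilating_poly gram_lin.
have [G [G_map GCG]] := selfadjoint_inner_inverse hM gram_map gram_sa p_neq0 p_ann.
by exists G.
Qed.

Lemma compress_transfer (E : lmodType C) actE ipE (W : M -> E) Wa
    (E' : lmodType C) actE' ipE' (W' : M -> E') Wa' X :
  Stinespring lI Phi actE ipE W Wa -> Stinespring lI Phi actE' ipE' W' Wa' ->
  compress actE ipE W Wa X -> compress actE' ipE' W' Wa' X.
Proof.
move=> hW hW' [T [T_map ->]].
have [G [G_map GCG]] := Stinespring_inner_inverse hW.
have [/HilbMod_preHilbMod hE W_map W_adj WaW] := hW.
have [/HilbMod_preHilbMod hE' W'_map W'_adj W'aW'] := hW'.
have hM := Mphi_preHilbMod n.
have [W_lin _ _] := W_map; have [_ _ [Ga G_adj]] := G_map.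
exists (W' \o Ga \o Wa \o T \o W \o G \o Wa'); split.
  exact: Lmap_comp (Lmap_adjoint hM hE' W'_adj) (Lmap_comp G_map
    (Lmap_comp W_map (Lmap_comp T_map (Lmap_comp (Lmap_adjoint hM hE W_adj)
    (Lmap_comp (Lmap_adjoint hM hM G_adj) W'_map))))).
apply: functional_extensionality => x /=.
rewrite !W'aW' -!WaW (inner_inverse_cancel hM hE W_lin W_adj GCG).
by rewrite (inner_inverse_cancel_adj hM hE W_lin W_adj G_adj GCG).
Qed.

End StinespringModules.

End HilbertModuleMaps.

Unset Implicit Arguments.

Theorem proposition3p12 (R : realType) (n m : nat)
    (lI : 'I_n -> nat) (lO : 'I_m -> nat)
    (Phi : 'M[R[i]]_n -> 'M[R[i]]_m) (hPhi : channel lI lO Phi)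
    (E : lmodType R[i]) (actE : E -> 'M[R[i]]_m -> E)
    (ipE : E -> E -> 'M[R[i]]_m)
    (W : Mphi R n lO -> E) (Wa : E -> Mphi R n lO)
    (hW : Stinespring lI Phi actE ipE W Wa)
    (E' : lmodType R[i]) (actE' : E' -> 'M[R[i]]_m -> E')
    (ipE' : E' -> E' -> 'M[R[i]]_m)
    (W' : Mphi R n lO -> E') (Wa' : E' -> Mphi R n lO)
    (hW' : Stinespring lI Phi actE' ipE' W' Wa') :
  (forall X, compress actE ipE W Wa X <-> compress actE' ipE' W' Wa' X) /\
  (forall X, compress actE ipE W Wa X ->
     Lmap lO (@actM R n m lO) (@ipM R n m lO)
             (@actM R n m lO) (@ipM R n m lO) X).
Proof.
split=> X; last exact: compress_Lmap hW.
by split; [exact: compress_transfer hW hW' | exact: compress_transfer hW' hW].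
Qed.
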